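(* Let $\alpha\in(0,1)$ and define $\|F\|=\max\{\|F\|_\infty,|\int_{-\infty}^0x\,dF(x)|\}$. Then for all distribution functions $F,G$ on $\mathbb R$ with $\|F\|<\infty$ and $\|G\|<\infty$, $$0\le\mathrm{CVaR}_\alpha(G)-\mathrm{CVaR}_\alpha(F)+\frac1\alpha\int_{-\infty}^{\mathrm{VaR}_\alpha(F)}\bigl(G(y)-F(y)\bigr)\,dy\le\frac1\alpha\|F-G\|\,\bigl|\mathrm{VaR}_\alpha(F)-\mathrm{VaR}_\alpha(G)\bigr|.$$
   Context: $\|F\|_\infty=\sup_x|F(x)|$. For a distribution function $F$, $\mathrm{VaR}_\alpha(F)=\inf\{y\in\mathbb R:F(y)\ge\alpha\}$ and $\mathrm{CVaR}_\alpha(F)=\mathrm{VaR}_\alpha(F)-\frac1\alpha\int_{-\infty}^{\mathrm{VaR}_\alpha(F)}F(y)\,dy$. *)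

From HB Require Import structures.
From mathcomp Require Import all_boot all_order all_algebra.
From mathcomp Require Import all_classical all_reals all_analysis.
Set Implicit Arguments. Unset Strict Implicit. Unset Printing Implicit Defensive.
Import Order.TTheory GRing.Theory Num.Theory.
Import numFieldNormedType.Exports.
Local Open Scope classical_set_scope.
Local Open Scope ring_scope.

(* A distribution function on R: nondecreasing, right-continuous,
   with limit 0 at -oo and 1 at +oo (MathComp-Analysis' cumulativeBounded). *)
Notation distrfun R := (cumulativeBounded (0:R) (1:R)).

Section Risk.
Context {R : realType}.

Definition VaR (alpha : R) (F : R -> R) : R := inf [set y : R | alpha <= F y].

Definition CVaR (alpha : R) (F : R -> R) : \bar R :=
  ((VaR alpha F)%:E -
   (alpha^-1)%:E * \int[lebesgue_measure]_(y in `]-oo, VaR alpha F]) (F y)%:E)%E.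

Definition supnorm (H : R -> R) : R := sup [set `|H x| | x in [set: R]].

Definition negmean (F : distrfun R) : \bar R :=
  (\int[lebesgue_stieltjes_measure F]_(x in `]-oo, (0%R:R)]%classic) x%:E)%E.

Definition dnorm (F : distrfun R) : \bar R :=
  Order.max (supnorm F)%:E `|negmean F|%E.

(* ||F - G||, where the Stieltjes integral against d(F-G) is
   int x dF - int x dG (the signed measure dF - dG). *)
Definition dnorm_diff (F G : distrfun R) : \bar R :=
  Order.max (supnorm (fun x => F x - G x))%:E `|(negmean F - negmean G)%E|%E.

End Risk.

(* Write v = VaR_alpha(F), w = VaR_alpha(G) and S = sup |F - G|.  Unfolding
   CVaR, the middle quantity equals
     alpha^-1 * (alpha * (w - v) - int_v^w G)     (oriented integral),
   and G stays within S of alpha between v and w: for v < y < w we have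
   alpha - S <= F y - S <= G y < alpha, and for w < y < v we have
   alpha <= G y <= F y + S < alpha + S.  Hence alpha * (w - v) - int_v^w G
   lies in [0, S * |w - v|].
   The integrals int_{-oo}^c F are finite: for b <= -1,
     int_{-oo}^b F <= sum_k F (b - k) = int sum_k 1_{x <= b - k} dF(x)
                   <= int_{-oo}^0 (-x) dF(x) = - negmean F. *)

From HB Require Import structures.
From mathcomp Require Import all_boot all_order all_algebra.
From mathcomp Require Import all_classical all_reals all_analysis.
From mathcomp Require Import measurable_realfun.
From mathcomp Require Import ring lra.
Import Order.TTheory GRing.Theory Num.Theory.
Local Open Scope classical_set_scope.
Local Open Scope ring_scope.

Section lebesgue_itv.
Context {R : realType}.
Local Notation lambda := (@lebesgue_measure R).

Lemma ge0_integral_itvNy_split (f : R -> \bar R) (b a : R) :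
  b <= a -> measurable_fun `]-oo, a] f -> (forall x, (0 <= f x)%E) ->
  (\int[lambda]_(x in `]-oo, a]) f x =
   \int[lambda]_(x in `]-oo, b]) f x + \int[lambda]_(x in `]b, a]) f x)%E.
Proof.
move=> ba mf f0; rewrite (@itv_bndbnd_setU _ _ _ (BRight b)) ?bnd_simp//.
rewrite ge0_integral_setU//; first by rewrite -itv_bndbnd_setU ?bnd_simp.
apply/disj_setPS => x [/=]; rewrite !in_itv/= => xb /andP[bx _].
by move: xb; rewrite leNgt bx.
Qed.

Lemma integral_cst_itv_oo (c a b : R) : a <= b ->
  (\int[lambda]_(x in `]a, b[) (cst c%:E) x = (c * (b - a))%:E)%E.
Proof.
move=> ab; rewrite integral_cst//.
have /= -> := lebesgue_measure_itv `]a, b[.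
move: ab; rewrite le_eqVlt => /orP[/eqP->|ab].
  by rewrite ltxx subrr mulr0 mule0.
by rewrite lte_fin ab -EFinD -EFinM.
Qed.

Lemma ge0_integral_itv_oo_ge (g : R -> R) (l a b : R) : a <= b ->
  measurable_fun `]a, b[ g ->
  (forall x, a < x < b -> 0 <= g x) -> (forall x, a < x < b -> l <= g x) ->
  ((l * (b - a))%:E <= \int[lambda]_(x in `]a, b[) (g x)%:E)%E.
Proof.
move=> ab mg g0 lg; have [l0|l_gt0] := leP l 0.
  apply: (@le_trans _ _ 0%E); first by rewrite lee_fin mulr_le0_ge0// subr_ge0.
  by apply: integral_ge0 => x; rewrite /= in_itv/= => /g0; rewrite lee_fin.
rewrite -integral_cst_itv_oo//; apply: ge0_le_integral => //.
- by move=> x _; rewrite lee_fin ltW.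
- exact/measurable_EFinP.
Qed.

Lemma ge0_integral_itv_oo_le (g : R -> R) (u a b : R) : a <= b ->
  measurable_fun `]a, b[ g -> (forall x, a < x < b -> 0 <= g x <= u) ->
  (\int[lambda]_(x in `]a, b[) (g x)%:E <= (u * (b - a))%:E)%E.
Proof.
move=> ab mg gu; rewrite -integral_cst_itv_oo//; apply: ge0_le_integral => //.
- by move=> x; rewrite /= in_itv/= => /gu /andP[g0 _]; rewrite lee_fin.
- exact/measurable_EFinP.
- by move=> x; rewrite /= in_itv/= => /gu /andP[_ gu']; rewrite lee_fin.
Qed.

End lebesgue_itv.

Lemma sum_indic_itvNy_le {R : realType} (b x : R) n :
  \sum_(0 <= k < n) \1_(`]-oo, b - k%:R]) x <= Num.max 0 (b - x + 1).
Proof.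
suff : \sum_(0 <= k < n) \1_(`]-oo, b - k%:R]) x <= (n%:R : R) /\
       \sum_(0 <= k < n) \1_(`]-oo, b - k%:R]) x <= Num.max 0 (b - x + 1).
  by case.
elim: n => [|n [IHn IHx]]; first by rewrite big_geq//; split; rewrite ?le_max lexx.
rewrite big_nat_recr//= indicE mem_setE in_itv/=.
have [xb|xb] := leP x (b - n%:R); last by rewrite addr0 (le_trans IHn) ?ler_nat.
rewrite -natr1 lerD2r; split => //.
by rewrite le_max lerD2r (le_trans IHn) ?orbT//; lra.
Qed.

Section cumulative_bounded.
Context {R : realType} (F : distrfun R).
Local Notation mu := (lebesgue_stieltjes_measure F).
Local Notation lambda := (@lebesgue_measure R).

Lemma cumulative_lebesgue_stieltjes r : (F r)%:E = mu `]-oo, r].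
Proof. by rewrite -cdf_lebesgue_stieltjes_id. Qed.

Lemma cumulative_ge0 r : 0 <= F r.
Proof. by rewrite -lee_fin cumulative_lebesgue_stieltjes measure_ge0. Qed.

Lemma cumulative_le1 r : F r <= 1.
Proof. by rewrite -lee_fin cumulative_lebesgue_stieltjes probability_le1. Qed.

Lemma measurable_cumulative (D : set R) : measurable D -> measurable_fun D F.
Proof.
by move=> mD; apply: nondecreasing_measurable => //; exact: cumulative_is_nondecreasing.
Qed.

Lemma measurable_EFin_cumulative (D : set R) :
  measurable D -> measurable_fun D (EFin \o F).
Proof. by move=> mD; apply/measurable_EFinP; exact: measurable_cumulative. Qed.

Lemma cumulative_lt_near_Ny e : 0 < e -> exists M, forall y, y < M -> F y < e.
Proof.
move=> e0; have /fcvgrPdist_lt/(_ e e0) [M [_ HM]] := cumulativeNy F.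
exists M => y /HM /=; rewrite sub0r normrN; exact: le_lt_trans (ler_norm _).
Qed.

Lemma cumulative_gt_near_y e : e < 1 -> exists M, forall y, M < y -> e < F y.
Proof.
rewrite -subr_gt0 => e1; have /fcvgrPdist_lt/(_ _ e1) [M [_ HM]] := cumulativey F.
exists M => y /HM /= /(le_lt_trans (ler_norm _)); lra.
Qed.

Lemma negmeanN :
  (- negmean F = \int[mu]_(x in `]-oo, 0%R]) (- x)%:E)%E.
Proof.
rewrite /negmean -integralN; first by apply: eq_integral => x _; rewrite EFinN.
rewrite fin_num_adde_defr// (eq_integral (fun=> 0%E)) ?integral0// => x.
by rewrite inE/= in_itv/= => x0; rewrite funeposE; apply/max_idPr; rewrite lee_fin.
Qed.

Lemma dnorm_negmean_fin_num : (dnorm F < +oo)%E -> negmean F \is a fin_num.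
Proof. by rewrite /dnorm gt_max fin_num_abs => /andP[]. Qed.

Lemma integral_cumulative_le_series b :
  (\int[lambda]_(y in `]-oo, b]) (F y)%:E <= \sum_(k <oo) (F (b - k%:R))%:E)%E.
Proof.
pose A k : set R := `]b - k.+1%:R, b - k%:R]%classic.
pose g k y := (F (b - k%:R) * \1_(A k) y)%:E.
have g0 k y : (0 <= g k y)%E by rewrite lee_fin mulr_ge0 ?cumulative_ge0.
have mg k : measurable_fun `]-oo, b] (g k).
  apply/measurable_EFinP; apply: measurable_funM => //.
  by apply: measurable_indic; exact: measurable_itv.
have F_le_g y : y <= b -> ((F y)%:E <= \sum_(k <oo) g k y)%E.
  rewrite -subr_ge0 => /truncn_itv; set k := Num.truncn (b - y) => /andP[k_le k_gt].
  apply: (@le_trans _ _ (g k y)); last first.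
    apply: (@le_trans _ _ (\sum_(0 <= i < k.+1) g i y)%E); last exact: nneseries_lim_ge.
    by rewrite big_nat_recr//= leeDr// sume_ge0.
  have yA : y \in A k by apply/mem_set; rewrite /A/= in_itv/=; apply/andP; split; lra.
  by rewrite /g indicE yA mulr1 lee_fin; apply: cumulative_is_nondecreasing; lra.
apply: (@le_trans _ _ (\int[lambda]_(y in `]-oo, b]) \sum_(k <oo) g k y)%E).
  apply: ge0_le_integral => //.
  - by move=> y _; rewrite lee_fin cumulative_ge0.
  - exact: measurable_EFin_cumulative.
  - by apply: (ge0_emeasurable_sum (P := xpredT)) => k *; [exact: g0|exact: mg].
rewrite integral_nneseries//; apply: lee_nneseries => k _.
  by move=> _; apply: integral_ge0 => y _.
rewrite /g; under eq_integral => y _ do rewrite EFinM.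
rewrite ge0_integralZl_EFin ?cumulative_ge0//; last first.
  by apply: measurableT_comp => //; apply: measurable_indic; exact: measurable_itv.
rewrite integral_indic; [|exact: measurable_itv..].
rewrite -[X in (_ <= X)%E]mule1 lee_wpmul2l ?lee_fin ?cumulative_ge0//.
apply: (@le_trans _ _ (lambda (A k))); first by apply: measureIl; exact: measurable_itv.
have /= -> := lebesgue_measure_itv `]b - k.+1%:R, b - k%:R].
rewrite lte_fin ltrD2l ltrN2 ltr_nat ltnSn -EFinD lee_fin -natr1; lra.
Qed.

Lemma series_cumulative_le_negmean b : b <= -1 ->
  (\sum_(k <oo) (F (b - k%:R))%:E <= - negmean F)%E.
Proof.
move=> b1; rewrite negmeanN.
pose I k x : \bar R := (\1_(`]-oo, b - k%:R]%classic : set R) x)%:E.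
have I0 k x : (0 <= I k x)%E by rewrite lee_fin indicE ler0n.
have mI (k : nat) : measurable_fun `]-oo, (0:R)] (I k).
  by apply: measurableT_comp => //; apply: measurable_indic; exact: measurable_itv.
have -> : (\sum_(k <oo) (F (b - k%:R))%:E =
           \int[mu]_(x in `]-oo, 0%R]) \sum_(k <oo) I k x)%E.
  rewrite integral_nneseries//; apply: eq_eseriesr => k _.
  rewrite cumulative_lebesgue_stieltjes integral_indic; [|exact: measurable_itv..].
  congr (mu _); apply/esym/setIidl => x /=; rewrite !in_itv/= => xb.
  by apply: le_trans xb _; have := ler0n R k; lra.
apply: ge0_le_integral => //.
- by move=> x _; apply: nneseries_ge0.
- by apply: (ge0_emeasurable_sum (P := xpredT)) => k *; [exact: I0|exact: mI].
- by apply: measurableT_comp => //; apply: measurableT_comp.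
move=> x; rewrite /= in_itv/= => x0.
apply: lime_le; first exact: is_cvg_nneseries.
apply: nearW => n; rewrite sumEFin lee_fin (le_trans (sum_indic_itvNy_le b x n))//.
by rewrite ge_max; apply/andP; split; lra.
Qed.

Hypothesis negmean_fin : negmean F \is a fin_num.

Lemma integral_cumulative_fin_num a :
  (\int[lambda]_(y in `]-oo, a]) (F y)%:E)%E \is a fin_num.
Proof.
have F0 y : (0 <= (F y)%:E)%E by rewrite lee_fin cumulative_ge0.
pose b := Num.min a (-1).
have ba : b <= a by rewrite ge_min lexx.
have b1 : b <= -1 by rewrite ge_min lexx orbT.
rewrite ge0_fin_numE; last exact: integral_ge0.
rewrite (ge0_integral_itvNy_split _ _ _ ba) //; last exact: measurable_EFin_cumulative.
apply: lte_add_pinfty.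
  apply: le_lt_trans (integral_cumulative_le_series b) _.
  apply: le_lt_trans (series_cumulative_le_negmean b b1) _.
  by rewrite ltey_eq fin_numN negmean_fin.
rewrite -integral_itv_bndo_bndc; last exact: measurable_EFin_cumulative.
apply: le_lt_trans (ge0_integral_itv_oo_le F 1 _ _ ba _ _) (ltry _).
- exact: measurable_cumulative.
- by move=> x _; rewrite cumulative_ge0 cumulative_le1.
Qed.

Lemma integrable_cumulative a : lambda.-integrable `]-oo, a] (EFin \o F).
Proof.
apply/integrableP; split; first exact: measurable_EFin_cumulative.
under eq_integral => y _ do rewrite /= ger0_norm ?cumulative_ge0//.
rewrite -ge0_fin_numE; first exact: integral_cumulative_fin_num.
by apply: integral_ge0 => y _; rewrite lee_fin cumulative_ge0.
Qed.

Lemma integral_cumulative_itv_ooE a b : a <= b ->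
  ((fine (\int[lambda]_(y in `]-oo, b]) (F y)%:E) -
    fine (\int[lambda]_(y in `]-oo, a]) (F y)%:E))%:E =
   \int[lambda]_(y in `]a, b[) (F y)%:E)%E.
Proof.
have F0 y : (0 <= (F y)%:E)%E by rewrite lee_fin cumulative_ge0.
move=> ab; rewrite EFinB !fineK ?integral_cumulative_fin_num//.
rewrite (ge0_integral_itvNy_split _ _ _ ab) //; last exact: measurable_EFin_cumulative.
rewrite [X in (X - _)%E]addeC addeK ?integral_cumulative_fin_num//.
by rewrite integral_itv_bndo_bndc//; exact: measurable_EFin_cumulative.
Qed.

End cumulative_bounded.

Lemma cumulativeB_le_supnorm {R : realType} (F G : distrfun R) x :
  `|F x - G x| <= supnorm (fun x => F x - G x).
Proof.
apply: ub_le_sup; last by exists x.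
exists 1 => _ [y _ <-]; rewrite ler_norml.
have := cumulative_ge0 F y; have := cumulative_le1 F y.
have := cumulative_ge0 G y; have := cumulative_le1 G y.
lra.
Qed.

Section value_at_risk.
Context {R : realType} (alpha : R) (F : distrfun R).
Hypotheses (alpha_gt0 : 0 < alpha) (alpha_lt1 : alpha < 1).

Let VaR_set_neq0 : [set y | alpha <= F y] !=set0.
Proof.
have [M FM] := cumulative_gt_near_y F _ alpha_lt1.
by exists (M + 1); apply/ltW/FM; rewrite ltrDl.
Qed.

Let VaR_set_lbound : has_lbound [set y | alpha <= F y].
Proof.
have [M FM] := cumulative_lt_near_Ny F _ alpha_gt0.
by exists M => y /= Fy; rewrite leNgt; apply/negP => /FM; rewrite ltNge Fy.
Qed.

Lemma alpha_le_cumulative y : VaR alpha F < y -> alpha <= F y.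
Proof.
move=> /(inf_lt VaR_set_neq0) [x /= Fx xy]; apply: le_trans Fx _.
by apply: cumulative_is_nondecreasing; exact: ltW.
Qed.

Lemma cumulative_lt_alpha y : y < VaR alpha F -> F y < alpha.
Proof.
move=> yV; rewrite ltNge; apply/negP => Fy.
by move: yV; rewrite ltNge (ge_inf VaR_set_lbound).
Qed.

End value_at_risk.

Section VaR_integral_gap.
Context {R : realType} (alpha S v : R) (G : distrfun R).
Hypotheses (alpha_gt0 : 0 < alpha) (alpha_lt1 : alpha < 1).
Hypothesis negmean_fin : negmean G \is a fin_num.
Hypothesis G_ge : forall y, v < y -> alpha - S <= G y.
Hypothesis G_le : forall y, y < v -> G y <= alpha + S.

Local Notation I c := (fine (\int[lebesgue_measure]_(y in `]-oo, c]) (G y)%:E)).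

Lemma VaR_integral_gap :
  0 <= alpha * (VaR alpha G - v) - (I (VaR alpha G) - I v)
    <= S * `|VaR alpha G - v|.
Proof.
set w := VaR alpha G.
have mG (a b : R) : measurable_fun `]a, b[ G by exact: measurable_cumulative.
have G0 y : 0 <= G y := cumulative_ge0 G y.
have [vw|wv] := leP v w.
- have lo : (((alpha - S) * (w - v))%:E <=
             \int[lebesgue_measure]_(y in `]v, w[) (G y)%:E)%E.
    by apply: ge0_integral_itv_oo_ge => // y /andP[vy _]; exact: G_ge.
  have hi : (\int[lebesgue_measure]_(y in `]v, w[) (G y)%:E <=
             (alpha * (w - v))%:E)%E.
    apply: ge0_integral_itv_oo_le => // y /andP[_ yw].
    by rewrite G0 ltW// cumulative_lt_alpha.
  move: lo hi; rewrite -(integral_cumulative_itv_ooE G negmean_fin _ _ vw) !lee_fin.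
  by rewrite ger0_norm ?subr_ge0// => lo hi; apply/andP; split; lra.
- have lo : ((alpha * (v - w))%:E <= \int[lebesgue_measure]_(y in `]w, v[) (G y)%:E)%E.
    apply: ge0_integral_itv_oo_ge (ltW wv) _ _ _ => // y /andP[wy _].
    exact: alpha_le_cumulative.
  have hi : (\int[lebesgue_measure]_(y in `]w, v[) (G y)%:E <=
             ((alpha + S) * (v - w))%:E)%E.
    by apply: ge0_integral_itv_oo_le (ltW wv) _ _ => // y /andP[_ yv]; rewrite G0 G_le.
  move: lo hi; rewrite -(integral_cumulative_itv_ooE G negmean_fin _ _ (ltW wv)) !lee_fin.
  by rewrite ler0_norm ?subr_le0 ?(ltW wv)// => lo hi; apply/andP; split; lra.
Qed.

End VaR_integral_gap.

Theorem lemma27 (R : realType) (alpha : R) (F G : distrfun R) :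
  0 < alpha < 1 ->
  (dnorm F < +oo)%E -> (dnorm G < +oo)%E ->
  (0 <= CVaR alpha G - CVaR alpha F
        + (alpha^-1)%:E *
          \int[lebesgue_measure]_(y in `]-oo, VaR alpha F]) (G y - F y)%:E)%E /\
  (CVaR alpha G - CVaR alpha F
        + (alpha^-1)%:E *
          \int[lebesgue_measure]_(y in `]-oo, VaR alpha F]) (G y - F y)%:E
   <= (alpha^-1)%:E * dnorm_diff F G * `|VaR alpha F - VaR alpha G|%:E)%E.
Proof.
move=> /andP[alpha_gt0 alpha_lt1].
move=> /dnorm_negmean_fin_num F_fin /dnorm_negmean_fin_num G_fin.
set v := VaR alpha F; set w := VaR alpha G; set S := supnorm (fun x => F x - G x).
have FG_le y : `|F y - G y| <= S := cumulativeB_le_supnorm F G y.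
have S_ge0 : 0 <= S := le_trans (normr_ge0 _) (FG_le 0).
pose I (H : distrfun R) c := fine (\int[lebesgue_measure]_(y in `]-oo, c]) (H y)%:E).
have IE (H : distrfun R) c : negmean H \is a fin_num ->
    (\int[lebesgue_measure]_(y in `]-oo, c]) (H y)%:E = (I H c)%:E)%E.
  by move=> H_fin; rewrite fineK; last exact: integral_cumulative_fin_num.
have /andP[gap_ge0 gap_le] : 0 <= alpha * (w - v) - (I G w - I G v) <= S * `|w - v|.
  apply: VaR_integral_gap => // y.
    move=> vy; have : alpha <= F y by apply: alpha_le_cumulative vy.
    move: (FG_le y); rewrite ler_norml; lra.
  move=> yv; have : F y < alpha by apply: cumulative_lt_alpha yv.
  move: (FG_le y); rewrite ler_norml; lra.
have IGF : (\int[lebesgue_measure]_(y in `]-oo, v]) (G y - F y)%:E =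
             (I G v - I F v)%:E)%E.
  by rewrite EFinB -!IE// -integralB_EFin//; exact: integrable_cumulative.
rewrite /CVaR -/v -/w IGF !IE// -!EFinM -!EFinB -!EFinD.
have -> : w - alpha^-1 * I G w - (v - alpha^-1 * I F v) + alpha^-1 * (I G v - I F v)
        = alpha^-1 * (alpha * (w - v) - (I G w - I G v)).
  by field; rewrite gt_eqF.
split; first by rewrite lee_fin mulr_ge0// invr_ge0 ltW.
apply: (@le_trans _ _ (alpha^-1 * S * `|v - w|)%:E).
  by rewrite lee_fin -mulrA ler_wpM2l ?invr_ge0 ?(ltW alpha_gt0)// distrC.
rewrite !EFinM lee_wpmul2r ?lee_fin//.
rewrite lee_wpmul2l ?lee_fin ?invr_ge0 ?(ltW alpha_gt0)//.
by rewrite /dnorm_diff le_max lexx.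
Qed.
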